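(* Let $p$ be an odd prime and $r$ an integer with $p \nmid r$. Let $$f_{r,p}(x) = \frac{1}{2\sqrt{2}}\left((1+\sqrt{2})^r (x+\sqrt{2})^p - (1-\sqrt{2})^r (x - \sqrt{2})^p\right) \in \mathbb{Z}[x].$$ Then the discriminant of $f_{r,p}$ is $(-1)^{\frac{p(p-1)}{2}} 2^{\frac{3}{2}(p-1)(p-2)} p^p$. *)

From mathcomp Require Import all_boot all_order all_algebra all_field.
Set Implicit Arguments. Unset Strict Implicit. Unset Printing Implicit Defensive.
Import Order.TTheory GRing.Theory Num.Theory.
Local Open Scope ring_scope.

(* The roots are the list provided by closed_field_poly_normal
   (f = lc(f) * prod (X - r_i)); the value does not depend on its order. *)
Definition poly_roots (F : closedFieldType) (f : {poly F}) : seq F :=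
  sval (closed_field_poly_normal f).

Definition disc (F : closedFieldType) (f : {poly F}) : F :=
  let rs := poly_roots f in
  let n := size rs in
  lead_coef f ^+ (2 * n - 2) *
  \prod_(i < n) \prod_(j < n | (i < j)%N) (rs`_i - rs`_j) ^+ 2.

(* f_{r,p}(x) = ((1+√2)^r (x+√2)^p - (1-√2)^r (x-√2)^p) / (2√2), viewed in C[x]
   (it has integer coefficients; the discriminant is the same over Z and C). *)
Definition f_rp (r : int) (p : nat) : {poly algC} :=
  let s := sqrtC 2 in
  (2 * s)^-1 *: ((1 + s) ^ r *: ('X + s%:P) ^+ p - (1 - s) ^ r *: ('X - s%:P) ^+ p).

From mathcomp Require Import all_boot all_order all_algebra all_field.
From mathcomp Require Import ring zify.
Import Order.TTheory GRing.Theory Num.Theory.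
Local Open Scope ring_scope.

(* With s = sqrt 2, a = (1 + sqrt 2)^r and b = (1 - sqrt 2)^r we have
   f_{r,p} = (a (X + s)^p - b (X - s)^p) / (2s) and ab = +-1.  Up to sign and a
   power of the leading coefficient, the discriminant is the product of f'
   over the roots.  At a root z, a (z + s)^p = b (z - s)^p, which collapses
   f'(z) (-s - z) (s - z) to p a (-s - z)^p; and the products of -s - z and of
   s - z over the roots are f(-s) = b (2s)^(p-1) and f(s) = a (2s)^(p-1) divided
   by the leading coefficient.  Eliminating the roots leaves
   disc f = +- p^p (ab)^(p-1) (2s)^((p-1)(p-2)), and (2 sqrt 2)^2 = 2^3. *)

Lemma big_neq_pairs (R : Type) (idx : R) (op : Monoid.com_law idx) n
    (G : 'I_n -> 'I_n -> R) :
  \big[op/idx]_(i < n) \big[op/idx]_(j < n | j != i) G i j =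
  op (\big[op/idx]_(i < n) \big[op/idx]_(j < n | (i < j)%N) G i j)
     (\big[op/idx]_(i < n) \big[op/idx]_(j < n | (i < j)%N) G j i).
Proof.
rewrite [X in op _ X](exchange_big_dep xpredT) //= -big_split /=.
apply: eq_bigr => i _; rewrite (bigID (fun j : 'I_n => (i < j)%N)) /=.
by congr (op _ _); apply: eq_bigl => j; rewrite -val_eqE /=; case: ltngtP.
Qed.

Lemma sum1_ltn_pairs n :
  (\sum_(i < n) \sum_(j < n | (i < j)%N) 1 = (n * (n - 1)) %/ 2)%N.
Proof.
have all_pairs : (\sum_(i < n) \sum_(j < n | j != i) 1 = n * (n - 1))%N.
  under eq_bigr => i _ do rewrite sum1_card cardC1 card_ord.
  by rewrite sum_nat_const card_ord subn1.
by rewrite -all_pairs big_neq_pairs /= addnn -muln2 mulnK.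
Qed.

Lemma prod_sqr_diff_pairs (R : comPzRingType) n (x : 'I_n -> R) :
  \prod_(i < n) \prod_(j < n | (i < j)%N) (x i - x j) ^+ 2 =
  (-1) ^+ ((n * (n - 1)) %/ 2) * \prod_(i < n) \prod_(j < n | j != i) (x i - x j).
Proof.
rewrite (@big_neq_pairs R 1 *%R) /= -big_split /= -sum1_ltn_pairs.
rewrite -prodrXr -big_split /=; apply: eq_bigr => i _.
rewrite -prodrXr -!big_split /=; apply: eq_bigr => j _.
by rewrite expr1 -opprB sqrrN mulN1r mulNr opprK expr2.
Qed.

Section DiscriminantByDerivative.
Context {F : closedFieldType} {f : {poly F}}.
Local Notation z := (poly_roots f).
Local Notation n := (size (poly_roots f)).
Local Notation lc := (lead_coef f).

Lemma poly_rootsE : f = lc *: \prod_(x <- z) ('X - x%:P).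
Proof. by rewrite /poly_roots; case: (closed_field_poly_normal f). Qed.

Lemma size_poly_roots : f != 0 -> size f = n.+1.
Proof.
by move=> f_neq0; rewrite {1}poly_rootsE size_scale ?lead_coef_eq0 ?size_prod_XsubC.
Qed.

Lemma horner_poly_roots y : f.[y] = lc * \prod_(x <- z) (y - x).
Proof.
rewrite [in f.[y]]poly_rootsE hornerZ horner_prod.
by under eq_bigr do rewrite hornerXsubC.
Qed.

Lemma root_poly_roots x : x \in z -> f.[x] = 0.
Proof.
move=> zx; rewrite horner_poly_roots (big_rem x zx) /= subrr.
by rewrite mul0r mulr0.
Qed.

Lemma deriv_poly_roots (i : 'I_n) :
  f^`().[z`_i] = lc * \prod_(j < n | j != i) (z`_i - z`_j).
Proof.
rewrite {1}poly_rootsE (big_nth 0) big_mkord (bigD1 i) //= derivZ derivM.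
rewrite derivXsubC !hornerE subrr mul0r addr0 horner_prod.
by under eq_bigr => j _ do rewrite hornerXsubC.
Qed.

Lemma disc_deriv :
  disc f * lc ^+ n =
  (-1) ^+ ((n * (n - 1)) %/ 2) * lc ^+ (2 * n - 2) * \prod_(x <- z) f^`().[x].
Proof.
rewrite /disc prod_sqr_diff_pairs (big_nth 0) big_mkord.
under [X in _ = _ * X]eq_bigr => i _ do rewrite deriv_poly_roots.
by rewrite big_split /= prodr_const card_ord; ring.
Qed.

End DiscriminantByDerivative.

Definition binomial_diff {R : fieldType} (s a b : R) (p : nat) : {poly R} :=
  (2 * s)^-1 *: (a *: ('X + s%:P) ^+ p - b *: ('X - s%:P) ^+ p).

Section BinomialDifference.
Context {F : closedFieldType} (s a b : F) (p : nat).
Hypotheses (w_neq0 : 2 * s != 0) (a_neq0 : a != 0) (b_neq0 : b != 0).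
Hypotheses (a_neq_b : a != b) (p_odd : odd p) (p_gt1 : (1 < p)%N).
Local Notation w := (2 * s).
Local Notation g := (binomial_diff s a b p).

Lemma horner_binomial_diff x :
  g.[x] = w^-1 * (a * (x + s) ^+ p - b * (x - s) ^+ p).
Proof. by rewrite !hornerE. Qed.

Lemma deriv_binomial_diff x :
  g^`().[x] = w^-1 * p%:R * (a * (x + s) ^+ p.-1 - b * (x - s) ^+ p.-1).
Proof. rewrite !derivE !deriv_exp !derivE !hornerE !hornerMn !hornerE; ring. Qed.

Lemma size_binomial_diff : size g = p.+1.
Proof.
have coef_pow (c : F) : (('X - c%:P) ^+ p)`_p = 1.
  have := lead_coef_exp ('X - c%:P) p.
  by rewrite lead_coefE size_exp_XsubC lead_coefXsubC expr1n.
rewrite /binomial_diff -[s in 'X + s%:P]opprK polyCN.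
apply/anti_leq/andP; split.
  rewrite (leq_trans (size_scale_leq _ _)) // (leq_trans (size_polyD _ _)) //.
  by rewrite size_polyN geq_max !(leq_trans (size_scale_leq _ _)) ?size_exp_XsubC.
rewrite ltnNge; apply: contra a_neq_b => /(nth_default 0).
rewrite coefZ coefB !coefZ !coef_pow !mulr1 => /eqP.
by rewrite mulf_eq0 invr_eq0 (negbTE w_neq0) subr_eq0.
Qed.

Let exprS_pred (c : F) : c ^+ p = c * c ^+ p.-1.
Proof. by rewrite -exprS prednK // ltnW. Qed.

Let addss : s + s = w.
Proof. by rewrite mulr_natl mulr2n. Qed.

Lemma binomial_diff_at_s : g.[s] = a * w ^+ p.-1.
Proof.
rewrite horner_binomial_diff subrr expr0n gtn_eqF ?(ltnW p_gt1) // mulr0 subr0.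
by rewrite addss exprS_pred mulrCA mulKf.
Qed.

Lemma binomial_diff_at_Ns : g.[- s] = b * w ^+ p.-1.
Proof.
rewrite horner_binomial_diff addNr expr0n gtn_eqF ?(ltnW p_gt1) // mulr0 sub0r.
rewrite -opprD addss exprNn -signr_odd p_odd expr1 mulN1r [b * _]mulrN opprK.
by rewrite exprS_pred mulrCA mulKf.
Qed.

Lemma deriv_binomial_diff_root x : g.[x] = 0 ->
  g^`().[x] * (- s - x) * (s - x) = p%:R * a * (- s - x) ^+ p.
Proof.
rewrite horner_binomial_diff => /eqP; rewrite mulf_eq0 invr_eq0 (negbTE w_neq0).
rewrite subr_eq0 => /eqP root_x.
have -> : - s - x = - (x + s) by rewrite opprD addrC.
rewrite exprNn -signr_odd p_odd expr1 mulN1r.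
transitivity (w^-1 * p%:R * (a * (x + s) ^+ p * (x - s) - b * (x - s) ^+ p * (x + s))).
  by rewrite deriv_binomial_diff [(x + s) ^+ p]exprS_pred [(x - s) ^+ p]exprS_pred; ring.
by rewrite -root_x; field; rewrite andbC -negb_or -mulf_eq0.
Qed.

Lemma disc_binomial_diff_horner :
  disc g * g.[- s] * g.[s] =
  (-1) ^+ ((p * (p - 1)) %/ 2) * (p%:R * a) ^+ p * g.[- s] ^+ p.
Proof.
have g_neq0 : g != 0 by rewrite -size_poly_eq0 size_binomial_diff.
have := size_poly_roots g_neq0; rewrite size_binomial_diff => -[].
have := disc_deriv (f := g); set z := poly_roots g; set lc := lead_coef g.
move=> disc_lc n_eq; rewrite -n_eq in disc_lc.
set S := (-1) ^+ _ in disc_lc *; clearbody S.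
rewrite !horner_poly_roots -/lc.
set U := \prod_(x <- z) (- s - x); set V := \prod_(x <- z) (s - x).
have deriv_prod : \prod_(x <- z) g^`().[x] * U * V = (p%:R * a) ^+ p * U ^+ p.
  rewrite -!big_split /= (eq_big_seq (fun x => p%:R * a * (- s - x) ^+ p)); last first.
    by move=> x /root_poly_roots /deriv_binomial_diff_root.
  by rewrite big_split /= prodrXl (big_nth 0) big_mkord prodr_const card_ord n_eq.
have lc_sqr : lc ^+ (2 * p - 2) * lc * lc = lc ^+ p * lc ^+ p.
  by rewrite -!exprSr -exprD; congr (_ ^+ _); lia.
have lc_neq0 : lc != 0 by rewrite lead_coef_eq0.
apply: (mulIf (expf_neq0 p lc_neq0)).
set m := (2 * p - 2)%N in disc_lc lc_sqr; clearbody m.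
transitivity (disc g * lc ^+ p * (lc * lc) * (U * V)); first by ring.
rewrite disc_lc.
transitivity (S * (lc ^+ m * lc * lc) * (\prod_(x <- z) g^`().[x] * U * V)); first by ring.
by rewrite deriv_prod lc_sqr !exprMn; ring.
Qed.

Lemma disc_binomial_diff :
  disc g = (-1) ^+ ((p * (p - 1)) %/ 2) * p%:R ^+ p * (a * b) ^+ (p - 1)
           * w ^+ ((p - 1) * (p - 2)).
Proof.
have := disc_binomial_diff_horner; rewrite binomial_diff_at_s binomial_diff_at_Ns.
set S := (-1) ^+ _; set W := w ^+ p.-1; clearbody S => disc_W.
have W_neq0 : W != 0 by rewrite expf_neq0.
have [k p_eq] : exists k, p = k.+2 by exists p.-2; lia.
have pow_p c : c ^+ p = c * c * c ^+ k by rewrite p_eq !exprS mulrA.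
have -> : (p - 2 = k)%N by rewrite p_eq subn2.
rewrite subn1 exprM -/W (_ : p.-1 = k.+1); last by rewrite p_eq.
rewrite exprS exprMn.
apply: (mulIf (mulf_neq0 (mulf_neq0 (mulf_neq0 a_neq0 b_neq0) W_neq0) W_neq0)).
transitivity (disc g * (b * W) * (a * W)); first by ring.
by rewrite disc_W !exprMn !pow_p; ring.
Qed.

End BinomialDifference.

Local Notation sqrt2 := (sqrtC 2 : algC).

Lemma sqrtC2_gt1 : 1 < sqrt2.
Proof. by rewrite -ltr_sqr ?qualifE /= ?ler01 ?sqrtC_ge0 ?ler0n // expr1n sqrtCK ltr1n. Qed.

Lemma sqrtC2_lt2 : sqrt2 < 2.
Proof. by rewrite -ltr_sqr ?qualifE /= ?ler0n ?sqrtC_ge0 ?ler0n // sqrtCK -natrX ltr_nat. Qed.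

Lemma mul_1DsqrtC2_1BsqrtC2 : (1 + sqrt2) * (1 - sqrt2) = -1.
Proof. by rewrite mulrC -subr_sqr expr1n sqrtCK; ring. Qed.

Lemma expr_1DsqrtC2_neq m : (0 < m)%N -> (1 + sqrt2) ^+ m != (1 - sqrt2) ^+ m.
Proof.
move=> m_gt0; apply/negP => /eqP /(congr1 Num.norm); rewrite !normrX.
have s_gt0 : 0 < sqrt2 := lt_trans ltr01 sqrtC2_gt1.
rewrite ger0_norm ?addr_ge0 ?ltW // ler0_norm ?subr_le0 ?ltW ?sqrtC2_gt1 // opprB.
have : (sqrt2 - 1) ^+ m < 1.
  by rewrite exprn_ilt1 ?subr_ge0 ?ltW ?sqrtC2_gt1 ?ltrBlDr ?sqrtC2_lt2 -?lt0n.
have : 1 < (1 + sqrt2) ^+ m by rewrite exprn_egt1 ?ltrDl // -lt0n.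
by move=> gt1 lt1 eq_m; move: (lt_trans lt1 gt1); rewrite eq_m ltxx.
Qed.

Lemma exprz_1DsqrtC2_neq (r : int) : r != 0 -> (1 + sqrt2) ^ r != (1 - sqrt2) ^ r.
Proof.
case: r => m m_neq0; first by apply: expr_1DsqrtC2_neq; rewrite lt0n.
by apply: contra (expr_1DsqrtC2_neq _ (ltn0Sn m)) => /eqP /invr_inj ->.
Qed.

Lemma exprz_1DsqrtC2_1BsqrtC2_sqr (r : int) :
  ((1 + sqrt2) ^ r * (1 - sqrt2) ^ r) ^+ 2 = 1.
Proof.
have unit_pm1 : (1 + sqrt2) * (1 - sqrt2) \is a GRing.unit.
  by rewrite mul_1DsqrtC2_1BsqrtC2 unitrN1.
move: unit_pm1; rewrite unitrM => /andP[unit_p unit_m].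
by rewrite -exprzMl // mul_1DsqrtC2_1BsqrtC2 expr2 -exprzMl ?unitrN1 // mulrNN mulr1 exp1rz.
Qed.

Lemma expr_2sqrtC2 k : (2 * sqrt2) ^+ (2 * k) = 2 ^+ (3 * k).
Proof. by rewrite !exprM [(2 * _) ^+ 2]exprMn sqrtCK; congr (_ ^+ _); ring. Qed.

Theorem theorem4p13 (p : nat) (r : int) :
  prime p -> odd p -> ~~ (p%:Z %| r)%Z ->
  disc (f_rp r p) =
    (-1) ^+ ((p * (p - 1)) %/ 2) * 2 ^+ ((3 * ((p - 1) * (p - 2))) %/ 2) * (p%:R) ^+ p.
Proof.
move=> /prime_gt1 p_gt1 p_odd p_ndvd_r.
have r_neq0 : r != 0 by apply: contraNneq p_ndvd_r => ->; rewrite dvdz0.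
have s_gt0 : 0 < sqrt2 := lt_trans ltr01 sqrtC2_gt1.
have a_neq0 : (1 + sqrt2) ^ r != 0 by rewrite expfz_neq0 // gt_eqF ?addr_gt0.
have b_neq0 : (1 - sqrt2) ^ r != 0 by rewrite expfz_neq0 // subr_eq0 lt_eqF ?sqrtC2_gt1.
have w_neq0 : 2 * sqrt2 != 0 by rewrite mulf_neq0 ?pnatr_eq0 ?gt_eqF.
have [k p1_eq] : exists k, (p - 1 = 2 * k)%N.
  by exists p./2; rewrite -{1}(odd_double_half p) p_odd subn1 -mul2n.
have -> : f_rp r p = binomial_diff sqrt2 ((1 + sqrt2) ^ r) ((1 - sqrt2) ^ r) p by [].
rewrite disc_binomial_diff ?exprz_1DsqrtC2_neq //.
rewrite p1_eq exprM exprz_1DsqrtC2_1BsqrtC2_sqr expr1n mulr1 -mulnA expr_2sqrtC2.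
by rewrite (mulnCA 3 2) mulKn // mulrAC.
Qed.
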